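(* Let $\mathcal{P}_1$ be the set of $s\in\mathcal{A}^*$ with $s_{|s|-1}<s_{|s|}=\mathsf{asc}(s)$. For every $n$ there is a bijection $\phi_1:\mathcal{A}_n\cap\mathcal{P}_1\to\mathcal{A}_{n-1}\cap\mathcal{A}^*$ such that for all $s$: $\mathsf{asc}(s)=\mathsf{asc}(\phi_1(s))+1$, $\mathsf{rmin}(s)=\mathsf{rmin}(\phi_1(s))+1$, and $\mathsf{rep},\mathsf{zero},\mathsf{max},\mathsf{ealm},\mathsf{rpos}$ take the same values on $s$ and $\phi_1(s)$.
   Context: For a sequence $s$, $\mathsf{asc}(s)=|\{i:s_i<s_{i+1}\}|$. An ascent sequence is a sequence $s=(s_1,\dots,s_n)$ of non-negative integers with $s_1=0$, $s_i\le\mathsf{asc}(s_1,\dots,s_{i-1})+1$ for $i\ge2$; $\mathcal{A}_n$ is the set of those of length $n$, $|s|$ the length; $\mathcal{A}^*$ is the set of all ascent sequences except those of the form $(0,1,\dots,|s|-1)$. $\mathsf{rep}(s)=|s|-|\{s_i\}|$; $\mathsf{zero}(s)=|\{i:s_i=0\}|$; $\mathsf{max}(s)=|\{i:s_i=i-1\}|$; $\mathsf{ealm}(s)=s_{\mathsf{max}(s)+1}$ if $\mathsf{max}(s)\ne|s|$, else $0$. A right-to-left minimum is an entry $s_i$ with $s_i<s_j$ for all $j>i$; $\mathsf{rmin}(s)$ is their number; they are indexed $0,\dots,\mathsf{rmin}(s)-1$ from left to right, with values $\mathrm{Rmin}(s)_m$ and positions $\mathrm{Prm}(s)_m$. $\mathsf{rpos}(s)$: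 $0$ if $\mathsf{rmin}(s)=|s|$; otherwise the maximal $m$ such that the value $\mathrm{Rmin}(s)_m$ occurs at least twice after position $\mathrm{Prm}(s)_{m-1}$ (for $m=0$: at least twice in $s$), and $0$ if none. *)

(* ascent sequences as seq nat, 0-indexed positions. *)
From mathcomp Require Import all_boot.
Set Implicit Arguments. Unset Strict Implicit. Unset Printing Implicit Defensive.

Definition asc (s : seq nat) : nat :=
  count (fun p : nat * nat => p.1 < p.2) (zip s (behead s)).

(* ascent sequence: s_1 = 0 and s_i <= asc(s_1..s_{i-1}) + 1 for i >= 2
   (0-indexed: s_0 = 0, s_i <= asc (take i s) + 1 for i >= 1). *)
Definition is_ascent (s : seq nat) : bool :=
  all (fun i => nth 0 s i <= (if i == 0 then 0 else (asc (take i s)).+1))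
      (iota 0 (size s)).

Definition A_n (n : nat) (s : seq nat) : bool := is_ascent s && (size s == n).

Definition A_star (s : seq nat) : bool := is_ascent s && (s != iota 0 (size s)).

Definition P1 (s : seq nat) : bool :=
  [&& A_star s, 2 <= size s,
      nth 0 s (size s).-2 < nth 0 s (size s).-1 &
      nth 0 s (size s).-1 == asc s].

Definition rep (s : seq nat) : nat := size s - size (undup s).
Definition zero (s : seq nat) : nat := count_mem 0 s.
(* max(s) = #{i (1-indexed) : s_i = i - 1} = #{i (0-indexed) : s_i = i} *)
Definition maxst (s : seq nat) : nat :=
  count (fun i => nth 0 s i == i) (iota 0 (size s)).
Definition ealm (s : seq nat) : nat :=
  if maxst s != size s then nth 0 s (maxst s) else 0.

(* Prm(s): positions (0-indexed, increasing) of right-to-left minima *)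
Definition Prm (s : seq nat) : seq nat :=
  [seq i <- iota 0 (size s) |
     all (fun j => nth 0 s i < nth 0 s j) (iota i.+1 (size s - i.+1))].
Definition Rmin (s : seq nat) : seq nat := [seq nth 0 s i | i <- Prm s].
Definition rmin (s : seq nat) : nat := size (Prm s).

Definition rpos_cond (s : seq nat) (m : nat) : bool :=
  2 <= count_mem (nth 0 (Rmin s) m)
         (if m == 0 then s else drop (nth 0 (Prm s) m.-1).+1 s).

Definition rpos (s : seq nat) : nat :=
  if rmin s == size s then 0
  else \max_(m < rmin s | rpos_cond s m) (m : nat).

From mathcomp Require Import all_boot zify.

(* An element of P1 is a sequence t of A^* followed by the value asc(t) + 1, and
   deleting this last entry is the bijection phi_1.  Every entry of an ascent
   sequence is at most its number of ascents, so the deleted entry is a strict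
   new maximum: it contributes one ascent and one right-to-left minimum (at the
   end, leaving the others in place), no repetition and no zero, and since it
   occurs only once it never satisfies the condition defining rpos.  Nor is it a
   fixed point s_i = i, since asc(t) + 1 = |t| would force t = (0, 1, ..., |t|-1). *)

Set Implicit Arguments.
Unset Strict Implicit.
Unset Printing Implicit Defensive.

Lemma iotaSr m n : iota m n.+1 = rcons (iota m n) (m + n).
Proof. by rewrite -addn1 iotaD cats1. Qed.

Definition droplast (T : Type) (s : seq T) : seq T := take (size s).-1 s.

Lemma droplast_rcons (T : Type) (t : seq T) x : droplast (rcons t x) = t.
Proof. by rewrite /droplast size_rcons -cats1 take_size_cat. Qed.

Lemma asc_cons2 a b l : asc [:: a, b & l] = (a < b) + asc (b :: l).
Proof. by []. Qed.

Lemma asc_rcons t x :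
  asc (rcons t x) = asc t + (if t is [::] then 0 else last 0 t < x).
Proof.
elim: t => [|a [|b l] IH] //; first by rewrite /asc /= addn0.
by rewrite !rcons_cons asc_cons2 -rcons_cons IH asc_cons2 /=; lia.
Qed.

Lemma asc_le_size t : asc t <= (size t).-1.
Proof.
elim/last_ind: t => [|t x IH] //; rewrite asc_rcons size_rcons.
by case: t IH => [|a l] //= IH; lia.
Qed.

Lemma asc_iota n : asc (iota 0 n) = n.-1.
Proof.
elim: n => [|[|n] IH] //.
have hlast : last 0 (iota 0 n.+1) = n by rewrite iotaSr last_rcons.
by rewrite iotaSr asc_rcons IH hlast /= ltnSn addn1.
Qed.

Lemma is_ascent_rcons t x :
  is_ascent (rcons t x) =
  is_ascent t && (x <= if t is [::] then 0 else (asc t).+1).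
Proof.
rewrite /is_ascent size_rcons iotaSr add0n all_rcons andbC.
congr andb; last by rewrite nth_rcons ltnn eqxx -cats1 take_size_cat //; case: t.
apply: eq_in_all => i; rewrite mem_iota add0n => /andP[_ hi].
by rewrite nth_rcons hi -cats1 takel_cat // ltnW.
Qed.

Lemma ascent_le_asc t : is_ascent t -> {in t, forall y, y <= asc t}.
Proof.
elim/last_ind: t => [|t x IH] //; rewrite is_ascent_rcons => /andP[At hx] y.
rewrite mem_rcons inE asc_rcons => /orP[/eqP->|yt].
  case: t IH At hx => [|a l] IH At /= hx; first by lia.
  by have := IH At _ (mem_last a l); case: ltnP => /=; lia.
by apply: leq_trans (IH At y yt) _; rewrite leq_addr.
Qed.

Lemma rcons_eq_iota t x :
  (rcons t x == iota 0 (size (rcons t x))) = (t == iota 0 (size t)) && (x == size t).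
Proof. by rewrite size_rcons iotaSr eqseq_rcons. Qed.

Lemma ascent_asc_size_iota t :
  is_ascent t -> (asc t).+1 = size t -> t = iota 0 (size t).
Proof.
elim/last_ind: t => [|t x IH] //.
rewrite is_ascent_rcons asc_rcons size_rcons => /andP[At hx] hasc.
case: t IH At hx hasc => [|a l] IH At hx hasc; first by case: x hx.
rewrite /= in hx hasc.
have hle : asc (a :: l) <= size l := asc_le_size (a :: l).
have hlt : last a l < x by move: hasc; case: ltnP => //=; lia.
have Et : a :: l = iota 0 (size l).+1.
  by apply: IH => //=; rewrite hlt in hasc; lia.
have hlast : last a l = size l by rewrite -[last a l]/(last 0 (a :: l)) Et iotaSr last_rcons.
have -> : x = (size l).+1 by move: hasc; rewrite hlt; lia.
by rewrite Et size_iota [RHS]iotaSr.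
Qed.

Lemma A_star_neq_nil t : A_star t -> t != [::].
Proof. by case: t. Qed.

Lemma P1_rcons t x : P1 (rcons t x) = A_star t && (x == (asc t).+1).
Proof.
case: t => [|a l]; first by rewrite /P1 /A_star !andbF.
have hpen : nth 0 (rcons (a :: l) x) (size l) = last a l.
  by rewrite nth_rcons ltnSn; exact: (nth_last 0 (a :: l)).
have hx : nth 0 (rcons (a :: l) x) (size l).+1 = x by rewrite nth_rcons ltnn eqxx.
rewrite /P1 /A_star is_ascent_rcons rcons_eq_iota asc_rcons !size_rcons hpen hx /=.
rewrite -[0 :: iota 1 (size l)]/(iota 0 (size l).+1).
have [At|] := boolP (is_ascent (a :: l)); last by [].
have lastP : last a l <= asc (a :: l) by apply: ascent_le_asc At _ (mem_last a l).
case: ltnP => hlt; last first.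
  have [hxe|_] := eqVneq x (asc (a :: l)).+1; last by rewrite andFb !andbF.
  by move: (leq_trans hlt lastP); rewrite hxe ltnn.
rewrite [_ + true]addn1 andTb.
have [->|_] := eqVneq x (asc (a :: l)).+1; last by rewrite !andbF.
rewrite leqnn !andbT !andTb.
by case: eqP => // ->; rewrite asc_iota /= eqxx.
Qed.

Lemma A_star_asc_succ_neq_size t : A_star t -> (asc t).+1 != size t.
Proof. by case/andP=> At; apply: contra => /eqP/(ascent_asc_size_iota At) <-. Qed.

Lemma Prm_lt_size s i : i \in Prm s -> i < size s.
Proof. by rewrite mem_filter mem_iota add0n => /andP[_ /andP[]]. Qed.

Lemma size_Rmin s : size (Rmin s) = rmin s.
Proof. exact: size_map. Qed.

Lemma count_mem_rcons_neq (T : eqType) (s : seq T) (v x : T) :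
  x != v -> count_mem v (rcons s x) = count_mem v s.
Proof. by move=> hxv; rewrite -cats1 count_cat /= (negbTE hxv) !addn0. Qed.

Lemma count_mem_drop_le (T : eqType) (s : seq T) (v : T) k :
  count_mem v (drop k s) <= count_mem v s.
Proof. by rewrite -{2}(cat_take_drop k s) count_cat leq_addl. Qed.

Lemma zero_rcons t x : x != 0 -> zero (rcons t x) = zero t.
Proof. exact: count_mem_rcons_neq. Qed.

Lemma maxst_le_size s : maxst s <= size s.
Proof. by rewrite /maxst -{2}(size_iota 0 (size s)) count_size. Qed.

Lemma maxst_eq_size s : (maxst s == size s) = (s == iota 0 (size s)).
Proof.
rewrite /maxst -{2}(size_iota 0 (size s)) -all_count.
apply/allP/eqP => [hfix | ->]; last first.
  by move=> i; rewrite size_iota mem_iota => /andP[_ hi]; rewrite nth_iota.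
apply: (@eq_from_nth _ 0); rewrite ?size_iota // => i hi.
by rewrite nth_iota // (eqP (hfix i _)) // mem_iota.
Qed.

Lemma maxst_rcons t x : x != size t -> maxst (rcons t x) = maxst t.
Proof.
move=> hx; rewrite /maxst size_rcons iotaSr -[rcons (iota _ _) _]cats1 count_cat /= add0n.
rewrite nth_rcons ltnn eqxx (negbTE hx) !addn0.
by apply: eq_in_count => i; rewrite mem_iota add0n => /andP[_ hi]; rewrite /= nth_rcons hi.
Qed.

Lemma ealm_rcons t x :
  x != size t -> t != iota 0 (size t) -> ealm (rcons t x) = ealm t.
Proof.
move=> hx hne; rewrite /ealm maxst_rcons // size_rcons.
have hlt : maxst t < size t by rewrite ltn_neqAle maxst_eq_size hne maxst_le_size.
by rewrite nth_rcons hlt !neq_ltn hlt ltnS ltnW.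
Qed.

Section NewMaximum.

Variables (t : seq nat) (x : nat).
Hypothesis lt_x : {in t, forall y, y < x}.

Lemma new_max_notin : x \notin t.
Proof. by apply/negP => /lt_x; rewrite ltnn. Qed.

Lemma asc_rcons_new_max : t != [::] -> asc (rcons t x) = (asc t).+1.
Proof. by case: t lt_x => // a l hlt _; rewrite asc_rcons /= hlt ?mem_last ?addn1. Qed.

Lemma rep_rcons_new_max : rep (rcons t x) = rep t.
Proof.
rewrite /rep undup_rcons !size_rcons subSS.
congr (_ - size _); apply/all_filterP/allP => y; rewrite mem_undup => /lt_x.
by rewrite neq_ltn => ->.
Qed.

Lemma Prm_rcons_new_max : Prm (rcons t x) = rcons (Prm t) (size t).
Proof.
rewrite /Prm size_rcons iotaSr filter_rcons subnn /= add0n.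
congr rcons; apply: eq_in_filter => i; rewrite mem_iota add0n => /andP[_ hi].
rewrite subSn // iotaSr subnKC // all_rcons !nth_rcons hi ltnn eqxx lt_x ?mem_nth //=.
by apply: eq_in_all => j; rewrite mem_iota subnKC // => /andP[_ hj]; rewrite nth_rcons hj.
Qed.

Lemma Rmin_rcons_new_max : Rmin (rcons t x) = rcons (Rmin t) x.
Proof.
rewrite /Rmin Prm_rcons_new_max map_rcons nth_rcons ltnn eqxx; congr rcons.
by apply/eq_in_map => i /Prm_lt_size hi; rewrite nth_rcons hi.
Qed.

Lemma rmin_rcons_new_max : rmin (rcons t x) = (rmin t).+1.
Proof. by rewrite /rmin Prm_rcons_new_max size_rcons. Qed.

Lemma rpos_cond_rcons_new_max m : m < rmin t -> rpos_cond (rcons t x) m = rpos_cond t m.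
Proof.
move=> hm; rewrite /rpos_cond Rmin_rcons_new_max nth_rcons size_Rmin hm.
have hv : nth 0 (Rmin t) m \in t by rewrite (nth_map 0 0 _ hm) mem_nth ?Prm_lt_size ?mem_nth.
have hx : x != nth 0 (Rmin t) m by rewrite neq_ltn lt_x ?orbT.
case: eqP => _; first by rewrite count_mem_rcons_neq.
have hm1 : m.-1 < size (Prm t) by apply: leq_ltn_trans hm; exact: leq_pred.
rewrite Prm_rcons_new_max nth_rcons hm1 drop_rcons ?count_mem_rcons_neq //.
exact/Prm_lt_size/mem_nth.
Qed.

Lemma rpos_cond_rcons_new_max_last : rpos_cond (rcons t x) (rmin t) = false.
Proof.
rewrite /rpos_cond Rmin_rcons_new_max nth_rcons size_Rmin ltnn eqxx.
have count_x : count_mem x (rcons t x) = 1.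
  by rewrite -cats1 count_cat /= eqxx (count_memPn new_max_notin).
apply/negbTE; rewrite -ltnNge ltnS -count_x.
by case: eqP => _; rewrite ?count_mem_drop_le.
Qed.

Lemma rpos_rcons_new_max : rpos (rcons t x) = rpos t.
Proof.
rewrite /rpos rmin_rcons_new_max size_rcons eqSS; case: eqP => // _.
rewrite big_mkcond big_ord_recr /= rpos_cond_rcons_new_max_last maxn0 [RHS]big_mkcond.
by apply: eq_bigr => i _; rewrite rpos_cond_rcons_new_max.
Qed.

End NewMaximum.

Lemma A_n_P1_inv n s :
  A_n n s && P1 s -> exists2 t, A_n n.-1 t && A_star t & s = rcons t (asc t).+1.
Proof.
case/lastP: s => [|t x]; first by rewrite andbF.
rewrite P1_rcons /A_n size_rcons => /and3P[/andP[_ /eqP <-] A_t /eqP ->].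
by exists t => //; case/andP: (A_t) => At _; rewrite At A_t /= eqxx.
Qed.

Lemma A_n_P1_rcons n t :
  A_n n.-1 t && A_star t -> A_n n (rcons t (asc t).+1) && P1 (rcons t (asc t).+1).
Proof.
case/andP=> /andP[At /eqP size_t] A_t.
have tn := A_star_neq_nil A_t.
have -> : n = (size t).+1 by move: tn; rewrite -size_eq0 size_t; case: n {size_t}.
rewrite P1_rcons A_t /A_n is_ascent_rcons At size_rcons !eqxx.
by case: t tn {At A_t size_t} => // a l _; rewrite ltnSn.
Qed.

Theorem mainTheorem10 (n : nat) :
  exists phi : seq nat -> seq nat,
    [/\ (forall s, A_n n s && P1 s -> A_n n.-1 (phi s) && A_star (phi s)),
        {in [pred s | A_n n s && P1 s] &, injective phi},
        (forall t, A_n n.-1 t && A_star t ->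
           exists2 s, A_n n s && P1 s & phi s = t) &
        (forall s, A_n n s && P1 s ->
           asc s = (asc (phi s)).+1 /\
           rmin s = (rmin (phi s)).+1 /\
           rep s = rep (phi s) /\
           zero s = zero (phi s) /\
           maxst s = maxst (phi s) /\
           ealm s = ealm (phi s) /\
           rpos s = rpos (phi s))].
Proof.
exists (@droplast nat); split.
- by move=> _ /A_n_P1_inv[t At ->]; rewrite droplast_rcons.
- by move=> _ _ /A_n_P1_inv[t1 _ ->] /A_n_P1_inv[t2 _ ->]; rewrite !droplast_rcons => ->.
- by move=> t At; exists (rcons t (asc t).+1); rewrite ?A_n_P1_rcons ?droplast_rcons.
move=> _ /A_n_P1_inv[t /andP[_ A_t] ->]; rewrite droplast_rcons.
have lt_x : {in t, forall y, y < (asc t).+1}.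
  by case/andP: A_t => At _ y /(ascent_le_asc At).
have x_neq_size := A_star_asc_succ_neq_size A_t.
have t_neq_iota : t != iota 0 (size t) by case/andP: A_t.
split; first exact/asc_rcons_new_max/A_star_neq_nil.
split; first exact: rmin_rcons_new_max.
split; first exact: rep_rcons_new_max.
split; first exact: zero_rcons.
split; first exact: maxst_rcons.
split; first exact: ealm_rcons.
exact: rpos_rcons_new_max.
Qed.
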